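(* Let $T=4$ and let $P$ be a probability distribution on pairs of binary sequences $(A,B)=(A_{1:4},B_{1:4})\in\{0,1\}^4\times\{0,1\}^4$ belonging to the class $\mathcal P_0$ of non-causal models, i.e. there exist a (possibly infinite) hidden attribute space, a probability distribution $P(R_A,R_B\mid E)$ over pairs of hidden attributes $(R_A,R_B)$, and conditional distributions such that $$P(A_{1:4},B_{1:4}\mid E)=\sum_{R_A,R_B}P(R_A,R_B\mid E)\,P(A_1\mid R_A)\,P(B_1\mid R_B)\prod_{t=2}^{4}P(A_t\mid A_{t-1},R_A)\,P(B_t\mid B_{t-1},R_B),$$ where the transitions are stationary: $P(A_t\mid A_{t-1},R_A)=P(A_{t'}\mid A_{t'-1},R_A)$ and $P(B_t\mid B_{t-1},R_B)=P(B_{t'}\mid B_{t'-1},R_B)$ for all $t,t'$ (the sum over hidden attributes being understood as an integral against a probability measure when the attribute space is infinite). Define $$c^{(1)}(A,B)=\Big(\mathbf 1\{A_2=B_2\neq A_3=B_3\}-\mathbf 1\{A_2=B_3\neq A_3=B_2\}\Big)\Big(1-\mathbf 1\{A_1\neq A_4\}\,\mathbf 1\{B_1\neq B_4\}\Big).$$ Then $\langle c^{(1)}(A,B)\rangle_P:=\sum_{A,B\in\{0,1\}^4}P(A,B\mid E)\,c^{(1)}(A,B)=0$.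
   Context: Here $A_t$ and $B_t$ denote the binary actions of two individuals (Alice and Bob) at time $t$, $E$ denotes the presence of a directed social-network edge from Alice to Bob, and $R_A,R_B$ are unobserved attributes of Alice and Bob whose joint distribution given $E$ is arbitrary. In a non-causal model, Bob's action at time $t$ depends only on his previous action and his hidden attribute (not on Alice's previous action), so $(A,B)$ is a mixture, over the hidden attributes, of products of two independent stationary (time-homogeneous) Markov chains on $\{0,1\}$. $\mathbf 1\{\cdot\}$ denotes the indicator function, and a chained condition such as $A_2=B_2\neq A_3=B_3$ means $A_2=B_2$, $A_3=B_3$ and $A_2\neq A_3$. *)

From HB Require Import structures.
From mathcomp Require Import all_boot all_order all_algebra.
From mathcomp Require Import all_classical all_reals all_analysis.
Set Implicit Arguments. Unset Strict Implicit. Unset Printing Implicit Defensive.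
Import Order.TTheory GRing.Theory Num.Theory.
Local Open Scope ring_scope.

(* A binary sequence of length T = 4: x (inord 0) = X_1, ..., x (inord 3) = X_4. *)
Notation bseq4 := {ffun 'I_4 -> bool}.
Definition at4 (x : bseq4) (k : nat) : bool := x (@inord 3 k).

Definition bern {R : ringType} (p : R) (x : bool) : R := if x then p else 1 - p.

(* Probability of a path of a stationary Markov chain on {0,1}:
   p1 = P(X_1 = 1), tr y = P(X_t = 1 | X_{t-1} = y) (same for every t). *)
Definition chain_prob {R : ringType} (p1 : R) (tr : bool -> R) (x : bseq4) : R :=
  bern p1 (at4 x 0) * bern (tr (at4 x 0)) (at4 x 1)
  * bern (tr (at4 x 1)) (at4 x 2) * bern (tr (at4 x 2)) (at4 x 3).

(* c^(1)(A,B); A_t = at4 a (t-1). *)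
Definition c1 {R : ringType} (a b : bseq4) : R :=
  (([&& at4 a 1 == at4 b 1, at4 a 2 == at4 b 2 & at4 a 1 != at4 a 2])%:R
   - ([&& at4 a 1 == at4 b 2, at4 a 2 == at4 b 1 & at4 a 1 != at4 a 2])%:R)
  * (1 - ((at4 a 0 != at4 a 3) && (at4 b 0 != at4 b 3))%:R).

From HB Require Import structures.
From mathcomp Require Import all_boot all_order all_algebra perm.
From mathcomp Require Import all_classical all_reals all_analysis.
From mathcomp Require Import ring.
Set Implicit Arguments. Unset Strict Implicit. Unset Printing Implicit Defensive.
Import Order.TTheory GRing.Theory Num.Theory.
Local Open Scope ring_scope.

(* Swapping the two middle states of a path z, x, y, z does not change its
   probability under a stationary chain on {0,1}: either x = y, or one of x, y
   equals z and both orders traverse the transitions 0 -> 1, 1 -> 0 and z -> z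
   once each.  The map that swaps the middle states of A when A_1 = A_4, else
   those of B when B_1 = B_4, is thus an involution on pairs of paths which
   preserves the weight of every mixture component, hence P itself.  It negates
   c^(1), which vanishes on the pairs it fixes, so <c^(1)> = -<c^(1)>. *)

Lemma sum_involution_opp (R : numDomainType) (I : finType) (s : I -> I)
    (f : I -> R) :
  involutive s -> (forall i, f (s i) = - f i) -> \sum_i f i = 0.
Proof.
move=> sK fs; have sum_opp : \sum_i f i = - \sum_i f i.
  by rewrite {1}(reindex_inj (inv_inj sK)) /= -sumrN; apply: eq_bigr => i _.
have : (\sum_i f i) *+ 2 = 0 by rewrite mulr2n {2}sum_opp subrr.
by move/eqP; rewrite mulrn_eq0 => /eqP.
Qed.

Definition swap_mid (x : bseq4) : bseq4 :=
  [ffun i => x (tperm (inord 1) (inord 2) i)].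

Lemma at4_swap_mid (x : bseq4) :
  [/\ at4 (swap_mid x) 0 = at4 x 0, at4 (swap_mid x) 1 = at4 x 2,
      at4 (swap_mid x) 2 = at4 x 1 & at4 (swap_mid x) 3 = at4 x 3].
Proof.
have inord_eq (m n : nat) :
    (m < 4)%N -> (n < 4)%N -> (@inord 3 m == inord n) = (m == n).
  by move=> lt_m lt_n; rewrite -val_eqE /= !inordK.
by rewrite /at4 !ffunE !permE /= !inord_eq.
Qed.

Lemma swap_midK : involutive swap_mid.
Proof. by move=> x; apply/ffunP => i; rewrite !ffunE tpermK. Qed.

Lemma at4_swap_mid_ends (x : bseq4) :
  (at4 (swap_mid x) 0 == at4 (swap_mid x) 3) = (at4 x 0 == at4 x 3).
Proof. by case: (at4_swap_mid x) => -> _ _ ->. Qed.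

Lemma chain_prob_swap_mid (R : comNzRingType) (p : R) (tr : bool -> R) (x : bseq4) :
  at4 x 0 = at4 x 3 -> chain_prob p tr (swap_mid x) = chain_prob p tr x.
Proof.
move=> ends; rewrite /chain_prob; case: (at4_swap_mid x) => -> -> -> ->.
rewrite -ends; case: (at4 x 0); case: (at4 x 1); case: (at4 x 2); ring.
Qed.

Lemma c1_swap_midl (R : nzRingType) (a b : bseq4) :
  c1 (swap_mid a) b = - c1 a b :> R.
Proof.
rewrite /c1; case: (at4_swap_mid a) => -> -> -> ->.
rewrite -mulNr opprB.
by case: (at4 a 1); case: (at4 a 2); case: (at4 b 1); case: (at4 b 2).
Qed.

Lemma c1_swap_midr (R : nzRingType) (a b : bseq4) :
  c1 a (swap_mid b) = - c1 a b :> R.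
Proof.
by rewrite /c1; case: (at4_swap_mid b) => -> -> -> ->; rewrite -mulNr opprB.
Qed.

Lemma c1_ends_flipped (R : nzRingType) (a b : bseq4) :
  at4 a 0 != at4 a 3 -> at4 b 0 != at4 b 3 -> c1 a b = 0 :> R.
Proof. by rewrite /c1 => -> ->; rewrite subrr mulr0. Qed.

Definition swap_mid_pair (ab : bseq4 * bseq4) : bseq4 * bseq4 :=
  let: (a, b) := ab in
  if at4 a 0 == at4 a 3 then (swap_mid a, b)
  else if at4 b 0 == at4 b 3 then (a, swap_mid b) else (a, b).

Lemma swap_mid_pairK : involutive swap_mid_pair.
Proof.
case=> a b; rewrite /swap_mid_pair.
case: ifP => [ea | ea]; first by rewrite at4_swap_mid_ends ea swap_midK.
by case: ifP => eb; rewrite ea ?at4_swap_mid_ends eb ?swap_midK.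
Qed.

Lemma c1_swap_mid_pair (R : nzRingType) (ab : bseq4 * bseq4) :
  c1 (swap_mid_pair ab).1 (swap_mid_pair ab).2 = - c1 ab.1 ab.2 :> R.
Proof.
case: ab => a b /=; case: ifP => ea; first exact: c1_swap_midl.
case: ifP => eb /=; first exact: c1_swap_midr.
by rewrite c1_ends_flipped ?ea ?eb ?oppr0.
Qed.

Lemma chain_prob_swap_mid_pair (R : comNzRingType) (pa pb : R) (ta tb : bool -> R)
    (ab : bseq4 * bseq4) :
  chain_prob pa ta (swap_mid_pair ab).1 * chain_prob pb tb (swap_mid_pair ab).2
  = chain_prob pa ta ab.1 * chain_prob pb tb ab.2.
Proof.
case: ab => a b /=; case: ifP => [/eqP ea | _]; first by rewrite chain_prob_swap_mid.
by case: ifP => [/eqP eb | _] //=; rewrite chain_prob_swap_mid.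
Qed.

Theorem mainTheorem1 (R : realType) (dA dB : measure_display)
  (TA : measurableType dA) (TB : measurableType dB)
  (mu : probability (TA * TB)%type R)
  (pA1 : TA -> R) (trA : bool -> TA -> R)
  (pB1 : TB -> R) (trB : bool -> TB -> R)
  (hpA1 : forall r, 0 <= pA1 r <= 1) (htrA : forall y r, 0 <= trA y r <= 1)
  (hpB1 : forall r, 0 <= pB1 r <= 1) (htrB : forall y r, 0 <= trB y r <= 1)
  (mpA1 : measurable_fun setT pA1) (mtrA : forall y, measurable_fun setT (trA y))
  (mpB1 : measurable_fun setT pB1) (mtrB : forall y, measurable_fun setT (trB y))
  (P : bseq4 -> bseq4 -> R)
  (hP : forall a b, ((P a b)%:E =
     \int[mu]_(r in setT)
        (chain_prob (pA1 r.1) (fun y => trA y r.1) a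
         * chain_prob (pB1 r.2) (fun y => trB y r.2) b)%:E)%E) :
  \sum_(a : bseq4) \sum_(b : bseq4) P a b * c1 a b = 0.
Proof.
have P_swap_mid_pair ab :
    P (swap_mid_pair ab).1 (swap_mid_pair ab).2 = P ab.1 ab.2.
  apply: EFin_inj; rewrite !hP; apply: eq_integral => r _.
  by rewrite chain_prob_swap_mid_pair.
rewrite pair_bigA /=; apply: (sum_involution_opp swap_mid_pairK) => ab /=.
by rewrite P_swap_mid_pair c1_swap_mid_pair mulrN.
Qed.
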